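(* Let $\mu>1$ and for each $N\ge3$ set $\gamma=\mu\gamma_1^N$. Then $\lim_{N\to\infty}c_N=V(\mu)$, where $V(\mu)=\prod_{k=1}^\infty\frac{\mu k^2-1}{\mu k^2+2}$, and $0<V(\mu)<\infty$.
   Context: $\gamma^N_k=\frac{1}{2\sin^2(k\pi/N)}$ for $k\ge1$; $c_N=\big[1-\frac{3}{2+2\gamma}\big]^{e(N)/2}\prod_{k=1}^{\lfloor (N-1)/2\rfloor}\big[1-\frac{3}{2+\gamma/\gamma^N_k}\big]$, where $e(N)=1$ if $N$ is even and $0$ if $N$ is odd. *)

From Stdlib Require Import Reals Lra Lia.
Open Scope R_scope.

Fixpoint prod_1_to (f : nat -> R) (n : nat) : R :=
  match n with
  | O => 1
  | S m => prod_1_to f m * f (S m)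
  end.

Definition gammaN (N k : nat) : R :=
  1 / (2 * (sin (INR k * PI / INR N)) ^ 2).

(* c_N (for a given gamma):
   [1 - 3/(2+2 gamma)]^{e(N)/2} * prod_{k=1}^{floor((N-1)/2)} [1 - 3/(2 + gamma/gamma^N_k)],
   e(N) = 1 if N even, 0 if N odd; the power 1/2 is the real square root. *)
Definition cN (gamma : R) (N : nat) : R :=
  (if Nat.even N then sqrt (1 - 3 / (2 + 2 * gamma)) else 1) *
  prod_1_to (fun k => 1 - 3 / (2 + gamma / gammaN N k)) (Nat.div (N - 1) 2).

Definition V_partial (mu : R) (n : nat) : R :=
  prod_1_to (fun k => (mu * INR k ^ 2 - 1) / (mu * INR k ^ 2 + 2)) n.

(** Every factor has the form [phi g = 1 - 3/(2+g)]: the factors of [V(mu)] are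
    [phi (mu k^2)] and those of [c_N] are [phi (mu r_k)] with
    [r_k = gamma^N_1/gamma^N_k = sin^2(k pi/N)/sin^2(pi/N)].

    1. Finite products: a product whose factors lie in [[0,1]] within [C/k^2]
       of [1] ("near one") changes by at most [C/K] past index [K].  This gives
       a dominated-convergence theorem for products with a growing number of
       factors.
    2. Elementary estimates on [phi] (range, defect [3/g], Lipschitz constant
       [3/4]) and on [sin] (cubic Taylor bounds) show [r_k >= max 1 (k^2/9)]
       and [|r_k - k^2| = O(k^4/N)], so the factors of [c_N] are uniformly
       near one and converge to those of [V(mu)]; the square-root prefactor
       for even [N] tends to [1].
    3. The partial products of [V(mu)] decrease and are bounded below, hence
       converge; positivity comes from the tail bound at [K = 28].  Dominated
       convergence and the product rule for limits then give [c_N -> V(mu)]. *)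

From Stdlib Require Import Reals Lra Lia.
Open Scope R_scope.

(** * Finite products *)

Lemma prod_1_to_ext (f g : nat -> R) (n : nat) :
  (forall k, (1 <= k <= n)%nat -> f k = g k) -> prod_1_to f n = prod_1_to g n.
Proof.
  induction n as [|n IH]; intros Hfg; simpl; [reflexivity|].
  rewrite IH by (intros; apply Hfg; lia). rewrite Hfg by lia. reflexivity.
Qed.

Lemma prod_pos (f : nat -> R) (n : nat) :
  (forall k, (1 <= k <= n)%nat -> 0 < f k) -> 0 < prod_1_to f n.
Proof.
  induction n as [|n IH]; intros Hf; simpl; [lra|].
  apply Rmult_lt_0_compat; [apply IH; intros; apply Hf; lia | apply Hf; lia].
Qed.

Lemma prod_unit_interval (f : nat -> R) (n : nat) :
  (forall k, (1 <= k <= n)%nat -> 0 <= f k <= 1) -> 0 <= prod_1_to f n <= 1.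
Proof.
  induction n as [|n IH]; intros Hf; simpl; [lra|].
  assert (HP := IH (fun k hk => Hf k ltac:(lia))).
  assert (Hn := Hf (S n) ltac:(lia)). nra.
Qed.

(** The first [n] factors of [f] lie in [[0,1]] and within [C/k^2] of [1]:
    the hypothesis under which infinite products converge uniformly. *)
Definition near_one (C : R) (n : nat) (f : nat -> R) : Prop :=
  forall k, (1 <= k <= n)%nat -> 0 <= f k <= 1 /\ 1 - f k <= C / INR k ^ 2.

Lemma near_one_unit_interval (C : R) (n : nat) (f : nat -> R) :
  near_one C n f -> 0 <= prod_1_to f n <= 1.
Proof. intros Hf. apply prod_unit_interval. intros k hk. apply (Hf k hk). Qed.

Lemma near_one_le (C : R) (n m : nat) (f : nat -> R) : (m <= n)%nat -> near_one C n f -> near_one C m f.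
Proof. intros hmn Hf k hk. apply Hf. lia. Qed.

Lemma inv_sq_le_telescope (m : R) : 1 <= m -> 1 / (m + 1) ^ 2 <= 1 / m - 1 / (m + 1).
Proof.
  intros hm.
  replace (1 / m - 1 / (m + 1)) with (1 / (m * (m + 1))) by (field; lra).
  apply Rmult_le_compat_l; [lra|]. apply Rinv_le_contravar; nra.
Qed.

Lemma prod_tail_bounds (C : R) (f : nat -> R) (K n : nat) :
  (1 <= K <= n)%nat -> 0 <= C -> near_one C n f ->
  prod_1_to f K * (1 - C * (1 / INR K - 1 / INR n)) <= prod_1_to f n <= prod_1_to f K.
Proof.
  intros [hK hKn] hC Hf. replace n with (K + (n - K))%nat in * by lia.
  generalize (n - K)%nat Hf. clear n hKn Hf. intros d Hf.
  assert (HK := near_one_unit_interval C K f (near_one_le C (K + d) K f ltac:(lia) Hf)).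
  induction d as [|d IH].
  - rewrite Nat.add_0_r, Rminus_diag, Rmult_0_r, Rminus_0_r, Rmult_1_r. lra.
  - rewrite Nat.add_succ_r in *. cbn [prod_1_to].
    destruct (IH (near_one_le C (S (K + d)) (K + d) f ltac:(lia) Hf)) as [Hlow Hup].
    destruct (Hf (S (K + d)) ltac:(lia)) as [[f0 f1] fC].
    assert (HP := near_one_unit_interval C _ f (near_one_le C (S (K + d)) (K + d) f ltac:(lia) Hf)).
    assert (hm : 1 <= INR (K + d)) by (apply (le_INR 1); lia).
    assert (Htel := inv_sq_le_telescope _ hm).
    rewrite S_INR in *.
    assert (Hdef : 1 - f (S (K + d)) <= C * (1 / (INR (K + d) + 1) ^ 2))
      by (unfold Rdiv in *; lra).
    set (P := prod_1_to f (K + d)) in *. set (a := f (S (K + d))) in *.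
    set (PK := prod_1_to f K) in *.
    assert (Hloss : P * (1 - a) <= PK * (C * (1 / INR (K + d) - 1 / (INR (K + d) + 1)))).
    { apply Rle_trans with (PK * (1 - a)); [apply Rmult_le_compat_r; lra|].
      apply Rmult_le_compat_l; [lra|].
      apply Rle_trans with (C * (1 / (INR (K + d) + 1) ^ 2)); [lra|].
      apply Rmult_le_compat_l; lra. }
    assert (Hsplit : PK * (1 - C * (1 / INR K - 1 / (INR (K + d) + 1)))
      = PK * (1 - C * (1 / INR K - 1 / INR (K + d)))
        - PK * (C * (1 / INR (K + d) - 1 / (INR (K + d) + 1)))) by ring.
    assert (P * a = P - P * (1 - a)) by ring.
    split; [lra | nra].
Qed.

Corollary prod_tail_close (C : R) (f : nat -> R) (K n : nat) :
  (1 <= K <= n)%nat -> 0 <= C -> near_one C n f ->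
  Rabs (prod_1_to f n - prod_1_to f K) <= C / INR K.
Proof.
  intros hKn hC Hf.
  destruct (prod_tail_bounds C f K n hKn hC Hf) as [Hlow Hup].
  assert (HK := near_one_unit_interval C K f (near_one_le C n K f ltac:(lia) Hf)).
  assert (0 <= 1 / INR n) by (apply Rlt_le, Rdiv_lt_0_compat; [lra | apply lt_0_INR; lia]).
  assert (0 <= C / INR K) by (apply Rmult_le_pos; [lra | apply Rlt_le, Rinv_0_lt_compat, lt_0_INR; lia]).
  assert (C * (1 / INR K) = C / INR K) by (unfold Rdiv; ring).
  set (PK := prod_1_to f K) in *.
  assert (PK * (C * (1 / INR K)) <= C * (1 / INR K)) by nra.
  assert (0 <= PK * (C * (1 / INR n))) by (apply Rmult_le_pos; [|apply Rmult_le_pos]; lra).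
  assert (PK * (1 - C * (1 / INR K - 1 / INR n))
          = PK - PK * (C * (1 / INR K)) + PK * (C * (1 / INR n))) by ring.
  apply Rabs_le. lra.
Qed.

Lemma cv_ge_eventually (u : nat -> R) (l c : R) :
  Un_cv u l -> (exists n0, forall n, (n >= n0)%nat -> c <= u n) -> c <= l.
Proof.
  intros Hu [n0 Hn]. destruct (Rle_dec c l) as [h|h]; [exact h|]. exfalso.
  destruct (Hu (c - l)) as [N HN]; [lra|].
  assert (h1 := HN (max N n0) ltac:(lia)). assert (h2 := Hn (max N n0) ltac:(lia)).
  unfold R_dist in h1. apply Rabs_def2 in h1. lra.
Qed.

Lemma cv_within_eventually (u : nat -> R) (l c d : R) :
  Un_cv u l -> (exists n0, forall n, (n >= n0)%nat -> Rabs (u n - c) <= d) ->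
  Rabs (l - c) <= d.
Proof.
  intros Hu [n0 Hn].
  assert (Hlow : c - d <= l).
  { apply (cv_ge_eventually u); [exact Hu|]. exists n0. intros n hn.
    generalize (Hn n hn). unfold Rabs. destruct Rcase_abs; lra. }
  assert (Hup : - (c + d) <= - l).
  { apply (cv_ge_eventually (opp_seq u)); [apply CV_opp, Hu|]. exists n0. intros n hn.
    generalize (Hn n hn). unfold opp_seq, Rabs. destruct Rcase_abs; lra. }
  apply Rabs_le. lra.
Qed.

Lemma cv_of_rate (u : nat -> R) (l D : R) :
  0 <= D -> (exists n0, forall n, (n >= n0)%nat -> Rabs (u n - l) <= D / INR (n + 1)) ->
  Un_cv u l.
Proof.
  intros hD [n0 Hn] eps he. destruct (INR_unbounded (D / eps)) as [m Hm].
  exists (max n0 m). intros n hn. unfold R_dist.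
  assert (hn1 : INR m + 1 <= INR (n + 1)) by (rewrite <- S_INR; apply le_INR; lia).
  assert (hp : 0 < INR (n + 1)) by (apply lt_0_INR; lia).
  assert (Hrate : D / INR (n + 1) < eps).
  { apply (Rmult_lt_reg_r (INR (n + 1))); [exact hp|].
    replace (D / INR (n + 1) * INR (n + 1)) with D by (field; lra).
    assert (D < eps * INR m) by (apply (Rmult_lt_reg_r (/ eps));
      [apply Rinv_0_lt_compat; lra | replace (eps * INR m * / eps) with (INR m) by (field; lra);
       unfold Rdiv in Hm; lra]).
    nra. }
  assert (h := Hn n ltac:(lia)). lra.
Qed.

Lemma prod_cv (A : nat -> nat -> R) (b : nat -> R) (K : nat) :
  (forall k, (1 <= k <= K)%nat -> Un_cv (fun n => A n k) (b k)) ->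
  Un_cv (fun n => prod_1_to (A n) K) (prod_1_to b K).
Proof.
  induction K as [|K IH]; intros H; simpl.
  - intros eps he. exists 0%nat. intros. unfold R_dist. rewrite Rminus_diag, Rabs_R0. lra.
  - apply CV_mult; [apply IH; intros; apply H; lia | apply H; lia].
Qed.

Lemma prod_dominated_cv (A : nat -> nat -> R) (b : nat -> R) (M : nat -> nat) (C V : R) :
  0 < C ->
  (forall n, near_one C (M n) (A n)) ->
  (forall K, near_one C K b) ->
  (forall K, exists n0, forall n, (n >= n0)%nat -> (K <= M n)%nat) ->
  (forall k, (1 <= k)%nat -> Un_cv (fun n => A n k) (b k)) ->
  Un_cv (prod_1_to b) V ->
  Un_cv (fun n => prod_1_to (A n) (M n)) V.
Proof.
  intros hC HA Hb HM Hcv HV eps he.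
  destruct (INR_unbounded (4 * C / eps)) as [K0 HK0].
  set (K := S K0).
  assert (hKp : 0 < INR K) by (apply lt_0_INR; unfold K; lia).
  assert (hCK : C / INR K < eps / 4).
  { assert (hK : 4 * C / eps < INR K) by (unfold K; rewrite S_INR; lra).
    apply (Rmult_lt_reg_r (INR K * 4 / eps)); [apply Rdiv_lt_0_compat; lra|].
    replace (C / INR K * (INR K * 4 / eps)) with (4 * C / eps) by (field; lra).
    replace (eps / 4 * (INR K * 4 / eps)) with (INR K) by (field; lra). lra. }
  assert (Hlim : Rabs (V - prod_1_to b K) <= C / INR K).
  { apply (cv_within_eventually (prod_1_to b)); [exact HV|]. exists K. intros n hn.
    apply prod_tail_close; [unfold K; lia | lra | apply Hb]. }
  destruct (prod_cv A b K (fun k hk => Hcv k ltac:(lia)) (eps / 4)) as [n1 Hn1]; [lra|].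
  destruct (HM K) as [n2 Hn2].
  exists (max n1 n2). intros n hn.
  assert (Hfin := Hn1 n ltac:(lia)). assert (HKM := Hn2 n ltac:(lia)). unfold R_dist in *.
  assert (Htail : Rabs (prod_1_to (A n) (M n) - prod_1_to (A n) K) <= C / INR K).
  { apply prod_tail_close; [unfold K; lia | lra | apply HA]. }
  set (x := prod_1_to (A n) (M n)) in *. set (y := prod_1_to (A n) K) in *.
  set (z := prod_1_to b K) in *.
  assert (Rabs (x - V) <= Rabs (x - y) + Rabs (y - z) + Rabs (z - V)).
  { replace (x - V) with ((x - y) + (y - z) + (z - V)) by ring.
    eapply Rle_trans; [apply Rabs_triang | apply Rplus_le_compat_r, Rabs_triang]. }
  rewrite Rabs_minus_sym in Hlim. lra.
Qed.

(** * The factor map [phi g = 1 - 3/(2+g)] *)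

Definition phi (g : R) : R := 1 - 3 / (2 + g).

Lemma phi_unit_interval (g : R) : 1 <= g -> 0 <= phi g <= 1.
Proof.
  intros hg. unfold phi.
  assert (0 < 3 / (2 + g)) by (apply Rdiv_lt_0_compat; lra).
  assert (3 / (2 + g) <= 1)
    by (apply (Rmult_le_reg_r (2 + g)); [lra|]; unfold Rdiv; rewrite Rmult_assoc, Rinv_l; lra).
  lra.
Qed.

Lemma phi_pos (g : R) : 1 < g -> 0 < phi g.
Proof.
  intros hg. unfold phi.
  assert (3 / (2 + g) < 1)
    by (apply (Rmult_lt_reg_r (2 + g)); [lra|]; unfold Rdiv; rewrite Rmult_assoc, Rinv_l; lra).
  lra.
Qed.

Lemma phi_defect (g : R) : 0 < g -> 1 - phi g <= 3 / g.
Proof.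
  intros hg. unfold phi. replace (1 - (1 - 3 / (2 + g))) with (3 / (2 + g)) by ring.
  apply Rmult_le_compat_l; [lra|]. apply Rinv_le_contravar; lra.
Qed.

Lemma phi_lipschitz (g h : R) : 0 <= g -> 0 <= h -> Rabs (phi g - phi h) <= 3 / 4 * Rabs (g - h).
Proof.
  intros hg hh. unfold phi.
  replace (1 - 3 / (2 + g) - (1 - 3 / (2 + h))) with (3 * (g - h) / ((2 + g) * (2 + h)))
    by (field; lra).
  unfold Rdiv. rewrite !Rabs_mult, Rabs_inv, (Rabs_pos_eq 3), (Rabs_pos_eq ((2 + g) * (2 + h))) by nra.
  assert (/ ((2 + g) * (2 + h)) <= / 4) by (apply Rinv_le_contravar; nra).
  assert (0 <= Rabs (g - h)) by apply Rabs_pos.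
  assert (0 < / ((2 + g) * (2 + h))) by (apply Rinv_0_lt_compat; nra).
  nra.
Qed.

Lemma sqrt_close_to_one (w : R) : 0 <= w <= 1 -> Rabs (sqrt w - 1) <= 1 - w.
Proof.
  intros hw.
  assert (hq1 : sqrt w <= 1) by (rewrite <- sqrt_1; apply sqrt_le_1_alt; lra).
  assert (hq0 := sqrt_pos w).
  assert (hq := sqrt_sqrt w ltac:(lra)).
  assert (w <= sqrt w) by nra.
  rewrite Rabs_left1 by lra. lra.
Qed.

(** * Sine estimates *)

Lemma sin_cubic_lower (a : R) : 0 <= a -> a <= PI -> a - a ^ 3 / 6 <= sin a.
Proof.
  intros h0 hPI. destruct (sin_bound a 0 h0 hPI) as [H _].
  unfold sin_approx, sin_term in H; simpl in H. lra.
Qed.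

(** For abstract [s1 ~ sin x] and [sk ~ sin (k x)] obeying the cubic Taylor
    bounds, the ratio [sk^2/s1^2] is at least [k^2/9] and is within
    [(k^4 + k^2) x^2] of [k^2]. *)
Lemma sq_ratio_bounds (x k s1 sk : R) :
  0 < x <= 4 / 3 -> 1 <= k -> k * x <= 2 ->
  x - x ^ 3 / 6 <= s1 <= x -> k * x - (k * x) ^ 3 / 6 <= sk <= k * x ->
  k ^ 2 / 9 <= sk ^ 2 / s1 ^ 2 /\ Rabs (sk ^ 2 / s1 ^ 2 - k ^ 2) <= (k ^ 4 + k ^ 2) * x ^ 2.
Proof.
  intros [hx hx4] hk hkx [s1l s1u] [skl sku].
  assert (s1_lower : 2 / 3 * x <= s1) by nra.
  assert (sk_lower : k * x / 3 <= sk).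
  { assert (ht : 0 < k * x) by nra.
    set (t := k * x) in *.
    assert (t * t <= 4) by nra.
    assert (t ^ 3 / 6 <= t * (2 / 3)) by (simpl; nra). lra. }
  assert (hs1 : 4 / 9 * x ^ 2 <= s1 ^ 2)
    by (replace (4 / 9 * x ^ 2) with ((2 / 3 * x) ^ 2) by field; apply pow_incr; nra).
  assert (hs1p : 0 < s1 ^ 2) by nra.
  split.
  - apply (Rmult_le_reg_r (s1 ^ 2)); [exact hs1p|].
    replace (sk ^ 2 / s1 ^ 2 * s1 ^ 2) with (sk ^ 2) by (field; lra).
    assert (s1 ^ 2 <= x ^ 2) by (apply pow_incr; nra).
    assert ((k * x / 3) ^ 2 <= sk ^ 2) by (apply pow_incr; nra).
    assert (0 <= k ^ 2) by nra. nra.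
  - assert (num_upper : sk ^ 2 - k ^ 2 * s1 ^ 2 <= k ^ 2 * x ^ 4 / 3).
    { assert ((x - x ^ 3 / 6) ^ 2 <= s1 ^ 2) by (apply pow_incr; nra).
      assert (k ^ 2 * (x - x ^ 3 / 6) ^ 2 <= k ^ 2 * s1 ^ 2) by (apply Rmult_le_compat_l; nra).
      assert (sk ^ 2 <= (k * x) ^ 2) by (apply pow_incr; nra).
      assert (0 <= k ^ 2 * x ^ 2 * (x ^ 4 / 36)) by (apply Rmult_le_pos; nra).
      nra. }
    assert (num_lower : - (k ^ 4 * x ^ 4 / 3) <= sk ^ 2 - k ^ 2 * s1 ^ 2).
    { assert (k ^ 2 * s1 ^ 2 <= k ^ 2 * x ^ 2) by (apply Rmult_le_compat_l; nra).
      assert ((k * x - (k * x) ^ 3 / 6) ^ 2 <= sk ^ 2) by (apply pow_incr; nra).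
      assert (0 <= (k * x) ^ 6 / 36) by (apply Rmult_le_pos; [apply pow_le|]; nra).
      nra. }
    replace (sk ^ 2 / s1 ^ 2 - k ^ 2) with ((sk ^ 2 - k ^ 2 * s1 ^ 2) / s1 ^ 2) by (field; lra).
    unfold Rdiv. rewrite Rabs_mult, Rabs_inv, (Rabs_pos_eq (s1 ^ 2)) by lra.
    apply (Rmult_le_reg_r (s1 ^ 2)); [exact hs1p|].
    rewrite Rmult_assoc, Rinv_l, Rmult_1_r by lra.
    assert (0 <= k ^ 2 * x ^ 4) by (apply Rmult_le_pos; nra).
    assert (0 <= k ^ 4 * x ^ 4) by (apply Rmult_le_pos; nra).
    assert ((k ^ 4 + k ^ 2) * x ^ 2 * (4 / 9 * x ^ 2) <= (k ^ 4 + k ^ 2) * x ^ 2 * s1 ^ 2)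
      by (apply Rmult_le_compat_l; [apply Rmult_le_pos; nra | lra]).
    apply Rabs_le. split; nra.
Qed.

Definition angle (n : nat) : R := PI / INR (n + 3).

Lemma angle_bounds (n : nat) : 0 < angle n <= 4 / 3 /\ angle n ^ 2 <= 16 / INR (n + 1).
Proof.
  unfold angle.
  assert (hN : 3 <= INR (n + 3)) by (replace 3 with (INR 3) by (simpl; ring); apply le_INR; lia).
  assert (hn : 0 < INR (n + 1) <= INR (n + 3)) by (split; [apply lt_0_INR | apply le_INR]; lia).
  assert (hPI := PI_RGT_0). assert (hPI4 := PI_4).
  assert (hxP : PI / INR (n + 3) * INR (n + 3) = PI) by (field; lra).
  set (x := PI / INR (n + 3)) in *.
  assert (hx : 0 < x) by (unfold x; apply Rdiv_lt_0_compat; lra).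
  split; [split; [exact hx | nra]|].
  apply (Rmult_le_reg_r (INR (n + 1))); [lra|].
  replace (16 / INR (n + 1) * INR (n + 1)) with 16 by (field; lra).
  assert (x ^ 2 * INR (n + 1) <= x ^ 2 * (INR (n + 3) * INR (n + 3)))
    by (apply Rmult_le_compat_l; nra).
  replace (x ^ 2 * (INR (n + 3) * INR (n + 3))) with (PI * PI) in * by (rewrite <- hxP; ring).
  nra.
Qed.

Lemma gammaN_angle (n k : nat) : gammaN (n + 3) k = 1 / (2 * sin (INR k * angle n) ^ 2).
Proof. unfold gammaN, angle, Rdiv. rewrite Rmult_assoc. reflexivity. Qed.

Lemma gamma_ratio_estimates (n k : nat) : (1 <= k)%nat -> (2 * k <= n + 2)%nat ->
  let r := gammaN (n + 3) 1 / gammaN (n + 3) k in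
  1 <= r /\ INR k ^ 2 / 9 <= r /\
  Rabs (r - INR k ^ 2) <= (INR k ^ 4 + INR k ^ 2) * (16 / INR (n + 1)).
Proof.
  intros hk hkn r.
  destruct (angle_bounds n) as [[hx hx4] hx2].
  assert (hk1 : 1 <= INR k) by (apply (le_INR 1); lia).
  assert (hPI := PI_RGT_0). assert (hPI4 := PI_4).
  assert (hkx : INR k * angle n <= PI / 2).
  { assert (2 * INR k <= INR (n + 3))
      by (replace 2 with (INR 2) by (simpl; ring); rewrite <- mult_INR; apply le_INR; lia).
    assert (hxP : angle n * INR (n + 3) = PI) by (unfold angle; field; lra). nra. }
  set (x := angle n) in *.
  assert (hxk : x <= INR k * x) by nra.
  assert (s1u := sin_lt_x x hx).
  assert (sku := sin_lt_x (INR k * x) ltac:(nra)).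
  assert (s1l := sin_cubic_lower x ltac:(lra) ltac:(lra)).
  assert (skl := sin_cubic_lower (INR k * x) ltac:(nra) ltac:(lra)).
  assert (hs1 : 0 < sin x) by (apply sin_gt_0; lra).
  assert (hs : sin x <= sin (INR k * x)) by (apply sin_incr_1; lra).
  assert (hr : r = sin (INR k * x) ^ 2 / sin x ^ 2).
  { unfold r. rewrite !gammaN_angle. fold x. rewrite Rmult_1_l. field. split; lra. }
  destruct (sq_ratio_bounds x (INR k) (sin x) (sin (INR k * x)) (conj hx hx4) hk1
    ltac:(lra) (conj s1l (Rlt_le _ _ s1u)) (conj skl (Rlt_le _ _ sku))) as [Hlow Hclose].
  rewrite hr. split; [|split; [exact Hlow|]].
  - apply (Rmult_le_reg_r (sin x ^ 2)); [nra|].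
    replace (sin (INR k * x) ^ 2 / sin x ^ 2 * sin x ^ 2) with (sin (INR k * x) ^ 2) by (field; lra).
    rewrite Rmult_1_l. apply pow_incr. lra.
  - eapply Rle_trans; [exact Hclose|]. apply Rmult_le_compat_l; [nra | exact hx2].
Qed.

Definition vfactor (mu : R) (k : nat) : R := phi (mu * INR k ^ 2).

Definition cfactor (mu : R) (n k : nat) : R := phi (mu * gammaN (n + 3) 1 / gammaN (n + 3) k).

Definition nfactors (n : nat) : nat := Nat.div (n + 3 - 1) 2.

Definition even_factor (mu : R) (n : nat) : R :=
  if Nat.even (n + 3) then sqrt (phi (2 * (mu * gammaN (n + 3) 1))) else 1.

Lemma cN_factorization (mu : R) (n : nat) :
  cN (mu * gammaN (n + 3) 1) (n + 3) = even_factor mu n * prod_1_to (cfactor mu n) (nfactors n).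
Proof. reflexivity. Qed.

Lemma V_partial_vfactor (mu : R) (n : nat) : 1 < mu -> V_partial mu n = prod_1_to (vfactor mu) n.
Proof.
  intros hmu. apply prod_1_to_ext. intros k hk.
  assert (1 <= INR k) by (apply (le_INR 1); lia).
  unfold vfactor, phi. field. nra.
Qed.

Lemma vfactor_pos (mu : R) (k : nat) : 1 < mu -> (1 <= k)%nat -> 0 < vfactor mu k.
Proof.
  intros hmu hk. assert (1 <= INR k) by (apply (le_INR 1); lia).
  assert (1 <= INR k ^ 2) by (simpl; nra). apply phi_pos. nra.
Qed.

Lemma vfactor_near_one (mu : R) (K : nat) : 1 < mu -> near_one 27 K (vfactor mu).
Proof.
  intros hmu k hk. assert (hk1 : 1 <= INR k) by (apply (le_INR 1); lia).
  assert (1 <= INR k ^ 2) by (simpl; nra). unfold vfactor. split; [apply phi_unit_interval; nra|].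
  eapply Rle_trans; [apply phi_defect; nra|].
  apply Rmult_le_compat; try lra; [apply Rlt_le, Rinv_0_lt_compat; nra|].
  apply Rinv_le_contravar; nra.
Qed.

Lemma cfactor_estimates (mu : R) (n k : nat) : 1 < mu -> (1 <= k)%nat -> (2 * k <= n + 2)%nat ->
  (0 <= cfactor mu n k <= 1 /\ 1 - cfactor mu n k <= 27 / INR k ^ 2) /\
  Rabs (cfactor mu n k - vfactor mu k) <= 12 * mu * (INR k ^ 4 + INR k ^ 2) / INR (n + 1).
Proof.
  intros hmu hk hkn.
  destruct (gamma_ratio_estimates n k hk hkn) as [Hr1 [Hr9 Hrk]].
  assert (hk1 : 1 <= INR k) by (apply (le_INR 1); lia).
  assert (hk2 : 1 <= INR k ^ 2) by (simpl; nra).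
  unfold cfactor, vfactor. rewrite <- (Rmult_div_assoc mu).
  set (r := gammaN (n + 3) 1 / gammaN (n + 3) k) in *.
  split; [split|].
  - apply phi_unit_interval. nra.
  - eapply Rle_trans; [apply phi_defect; nra|].
    apply (Rmult_le_reg_r (mu * r * INR k ^ 2)); [apply Rmult_lt_0_compat; nra|].
    replace (3 / (mu * r) * (mu * r * INR k ^ 2)) with (3 * INR k ^ 2) by (field; nra).
    replace (27 / INR k ^ 2 * (mu * r * INR k ^ 2)) with (27 * (mu * r)) by (field; nra).
    nra.
  - eapply Rle_trans; [apply phi_lipschitz; nra|].
    replace (mu * r - mu * INR k ^ 2) with (mu * (r - INR k ^ 2)) by ring.
    rewrite Rabs_mult, (Rabs_pos_eq mu) by lra.
    replace (12 * mu * (INR k ^ 4 + INR k ^ 2) / INR (n + 1))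
      with (3 / 4 * (mu * ((INR k ^ 4 + INR k ^ 2) * (16 / INR (n + 1)))))
      by (field; apply not_0_INR; lia).
    apply Rmult_le_compat_l; [lra|]. apply Rmult_le_compat_l; lra.
Qed.

(** The prefactor tends to [1] at rate [O(1/N)], since [1 - phi g <= 3 sin^2(pi/N)/mu]. *)
Lemma even_factor_close (mu : R) (n : nat) : 1 < mu -> Rabs (even_factor mu n - 1) <= 48 / INR (n + 1).
Proof.
  intros hmu. unfold even_factor.
  assert (hp : 0 < INR (n + 1)) by (apply lt_0_INR; lia).
  destruct (Nat.even (n + 3)).
  2: { rewrite Rminus_diag, Rabs_R0. apply Rlt_le, Rdiv_lt_0_compat; lra. }
  destruct (angle_bounds n) as [[hx hx4] hx2].
  assert (hPI := PI2_3_2).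
  rewrite gammaN_angle, Rmult_1_l.
  set (x := angle n) in *.
  assert (hs0 : 0 < sin x) by (apply sin_gt_0; lra).
  assert (hsx := sin_lt_x x hx).
  assert (hs1 := SIN_bound x).
  assert (hg : 2 * (mu * (1 / (2 * sin x ^ 2))) = mu / sin x ^ 2) by (field; lra).
  rewrite hg.
  assert (hg1 : 1 <= mu / sin x ^ 2).
  { apply (Rmult_le_reg_r (sin x ^ 2)); [nra|].
    replace (mu / sin x ^ 2 * sin x ^ 2) with mu by (field; lra). nra. }
  eapply Rle_trans; [apply sqrt_close_to_one, phi_unit_interval, hg1|].
  eapply Rle_trans; [apply phi_defect; lra|].
  replace (3 / (mu / sin x ^ 2)) with (3 * sin x ^ 2 / mu) by (field; lra).
  apply Rle_trans with (3 * x ^ 2); [|lra].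
  apply (Rmult_le_reg_r mu); [lra|].
  replace (3 * sin x ^ 2 / mu * mu) with (3 * sin x ^ 2) by (field; lra).
  assert (sin x ^ 2 <= x ^ 2) by (apply pow_incr; lra). nra.
Qed.

(** * Convergence *)

(** The partial products of [V(mu)] decrease and stay in [[0,1]], hence converge;
    the limit is positive because the tail beyond [k = 28] loses at most the
    factor [1 - 27/28]. *)
Lemma V_cv_pos (mu : R) : 1 < mu -> exists V, Un_cv (V_partial mu) V /\ 0 < V.
Proof.
  intros hmu.
  assert (Hnear := vfactor_near_one mu).
  assert (Hdec : Un_decreasing (V_partial mu)).
  { intro n. rewrite !V_partial_vfactor by exact hmu. cbn [prod_1_to].
    destruct (near_one_unit_interval 27 n _ (Hnear n hmu)).
    destruct (Hnear (S n) hmu (S n) ltac:(lia)) as [[? ?] _]. nra. }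
  assert (Hlb : has_lb (V_partial mu)).
  { exists 0. intros y [i ->]. unfold opp_seq. rewrite V_partial_vfactor by exact hmu.
    destruct (near_one_unit_interval 27 i _ (Hnear i hmu)). lra. }
  destruct (decreasing_cv _ Hdec Hlb) as [V HV].
  exists V. split; [exact HV|].
  assert (hp28 : 0 < prod_1_to (vfactor mu) 28)
    by (apply prod_pos; intros; apply vfactor_pos; [exact hmu | lia]).
  apply Rlt_le_trans with (prod_1_to (vfactor mu) 28 * (1 - 27 * (1 / 28))); [nra|].
  apply (cv_ge_eventually _ _ _ HV). exists 28%nat. intros n hn.
  rewrite V_partial_vfactor by exact hmu.
  destruct (prod_tail_bounds 27 (vfactor mu) 28 n ltac:(lia) ltac:(lra) (Hnear n hmu)) as [Hlow _].
  assert (0 <= 1 / INR n) by (apply Rlt_le, Rdiv_lt_0_compat; [lra | apply lt_0_INR; lia]).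
  replace (INR 28) with 28 in Hlow by (simpl; ring). nra.
Qed.

Lemma cfactor_prod_cv (mu V : R) : 1 < mu -> Un_cv (V_partial mu) V ->
  Un_cv (fun n => prod_1_to (cfactor mu n) (nfactors n)) V.
Proof.
  intros hmu HV.
  apply (prod_dominated_cv (cfactor mu) (vfactor mu) nfactors 27 V); [lra | | | | |].
  - intros n k hk. unfold nfactors in hk.
    assert (2 * ((n + 3 - 1) / 2) <= n + 3 - 1)%nat by apply Nat.Div0.mul_div_le.
    exact (proj1 (cfactor_estimates mu n k hmu ltac:(lia) ltac:(lia))).
  - intros K. apply vfactor_near_one, hmu.
  - intros K. exists (2 * K)%nat. intros n hn. unfold nfactors.
    replace K with ((2 * K) / 2)%nat at 1 by (rewrite Nat.mul_comm, Nat.div_mul; lia).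
    apply Nat.Div0.div_le_mono. lia.
  - intros k hk. apply (cv_of_rate _ _ (12 * mu * (INR k ^ 4 + INR k ^ 2))).
    + assert (1 <= INR k) by (apply (le_INR 1); lia). apply Rmult_le_pos; nra.
    + exists (2 * k)%nat. intros n hn.
      exact (proj2 (cfactor_estimates mu n k hmu hk ltac:(lia))).
  - eapply Un_cv_ext; [|exact HV]. intro n. apply V_partial_vfactor, hmu.
Qed.

Theorem proposition3p2 (mu : R) (hmu : 1 < mu) :
  exists V : R,
    Un_cv (V_partial mu) V /\
    0 < V /\
    Un_cv (fun n : nat => cN (mu * gammaN (n + 3) 1) (n + 3)) V.
Proof.
  destruct (V_cv_pos mu hmu) as [V [HV HVpos]].
  exists V. split; [exact HV | split; [exact HVpos|]].
  assert (Heven : Un_cv (even_factor mu) 1).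
  { apply (cv_of_rate _ _ 48); [lra|]. exists 0%nat. intros n _. apply even_factor_close, hmu. }
  assert (Hprod := CV_mult _ _ _ _ Heven (cfactor_prod_cv mu V hmu HV)).
  rewrite Rmult_1_l in Hprod.
  eapply Un_cv_ext; [|exact Hprod]. intro n. symmetry. apply cN_factorization.
Qed.
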